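(* Let $G$ be a locally nilpotent profinite group. Then there exist a positive integer $n$, elements $g_1,g_2\in G$ and an open subgroup $H\leq G$ such that $[g_1h_1,{}_n\,g_2h_2]=1$ for all $h_1,h_2\in H$.
   Context: For elements $x,y$ of a group, $[x,{}_0y]=x$ and $[x,{}_ny]=[[x,{}_{n-1}y],y]$ for $n\geq1$, where $[u,v]=u^{-1}v^{-1}uv$. A group is locally nilpotent if every finitely generated subgroup is nilpotent. *)

From HB Require Import structures.
From mathcomp Require Import all_boot all_order all_algebra.
From mathcomp Require Import all_classical all_reals all_analysis.
Set Implicit Arguments. Unset Strict Implicit. Unset Printing Implicit Defensive.
Local Open Scope classical_set_scope.

Definition group_axioms (T : Type) (mul : T -> T -> T) (inv : T -> T) (one : T) :=
  [/\ forall x y z, mul x (mul y z) = mul (mul x y) z,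
      forall x, mul one x = x,
      forall x, mul x one = x,
      forall x, mul (inv x) x = one &
      forall x, mul x (inv x) = one].

Definition topological_group (T : topologicalType) (mul : T -> T -> T)
    (inv : T -> T) (one : T) :=
  [/\ group_axioms mul inv one,
      continuous (fun p : T * T => mul p.1 p.2) &
      continuous inv].

Definition profinite_group (T : topologicalType) (mul : T -> T -> T)
    (inv : T -> T) (one : T) :=
  [/\ topological_group mul inv one,
      compact [set: T],
      hausdorff_space T &
      totally_disconnected [set: T]].

Section GroupNotions.
Variables (T : Type) (mul : T -> T -> T) (inv : T -> T) (one : T).

Definition comm (u v : T) : T := mul (mul (mul (inv u) (inv v)) u) v.

Fixpoint iter_comm (x : T) (n : nat) (y : T) : T :=
  match n with
  | 0 => x
  | n'.+1 => comm (iter_comm x n' y) y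
  end.

Definition is_subgroup (K : set T) :=
  [/\ K one, forall x y, K x -> K y -> K (mul x y) & forall x, K x -> K (inv x)].

Definition gen (S : set T) : set T :=
  [set x | forall K, is_subgroup K -> S `<=` K -> K x].

Definition finitely_generated_subgroup (K : set T) :=
  exists S : set T, finite_set S /\ K = gen S.

(* lower central series of a subgroup K: gamma_1 = K, gamma_{i+1} = [gamma_i, K] *)
Fixpoint lower_central (K : set T) (i : nat) : set T :=
  match i with
  | 0 => K
  | i'.+1 => gen [set z | exists a b, lower_central K i' a /\ K b /\ z = comm a b]
  end.

Definition nilpotent_subgroup (K : set T) :=
  exists c, lower_central K c = [set one].

Definition locally_nilpotent :=
  forall K, finitely_generated_subgroup K -> nilpotent_subgroup K.

End GroupNotions.

From HB Require Import structures.
From mathcomp Require Import all_boot all_order all_algebra.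
From mathcomp Require Import all_classical all_reals all_analysis.
Local Open Scope classical_set_scope.

(* The sets E_n = {(x, y) | [x, _n y] = 1} are closed in the compact Hausdorff
   space G x G, and local nilpotence makes them cover it, so by the Baire
   category theorem some E_n contains a nonempty open set, hence a box
   g1 H x g2 H with H an open subgroup: in a profinite group the open subgroups
   form a base at 1.  The latter holds because a compact Hausdorff totally
   disconnected space is zero-dimensional (its quasi-components are connected),
   and the right stabilizer of a compact open neighbourhood of 1 is an open
   subgroup inside it. *)

Section GroupIdentities.
Context {T : Type} {mul : T -> T -> T} {inv : T -> T} {one : T}.
Hypothesis G : group_axioms mul inv one.

Lemma inv_one : inv one = one.
Proof.
by case: G => _ _ mulg1 mulVg _; rewrite -{1}(mulg1 (inv one)) mulVg.
Qed.

Lemma comm1g y : comm mul inv one y = one.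
Proof.
by case: G => _ mul1g mulg1 mulVg _; rewrite /comm inv_one mul1g mulg1 mulVg.
Qed.

Lemma iter_comm_eq1_le x y n m : (n <= m)%N ->
  iter_comm mul inv x n y = one -> iter_comm mul inv x m y = one.
Proof.
move=> /subnKC <-; elim: (m - n)%N => [|k IHk] xy1; first by rewrite addn0.
by rewrite addnS /= IHk // comm1g.
Qed.

Lemma sub_gen S : S `<=` gen mul inv one S.
Proof. by move=> x Sx K _; apply. Qed.

Lemma lower_central_iter_comm K x y : K x -> K y ->
  forall i, lower_central mul inv one K i (iter_comm mul inv x i y).
Proof.
move=> Kx Ky; elim=> [|i IHi] //=.
by apply: sub_gen; exists (iter_comm mul inv x i y), y.
Qed.

Lemma locally_nilpotent_engel : locally_nilpotent mul inv one ->
  forall x y, exists n, iter_comm mul inv x n y = one.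
Proof.
move=> LN x y; pose K := gen mul inv one [set x; y].
have [|c Kc1] := LN K.
  by exists [set x; y]; split; first exact: finite_set2.
exists c; have : lower_central mul inv one K c (iter_comm mul inv x c y).
  by apply: lower_central_iter_comm; apply: sub_gen; [left|right].
by rewrite Kc1.
Qed.

Lemma is_subgroup_right_stabilizer (D : set T) :
  is_subgroup mul inv one [set x | forall c, D c <-> D (mul c x)].
Proof.
case: G => mulA _ mulg1 mulVg _; split.
- by move=> c; rewrite mulg1.
- move=> x y Dx Dy c; rewrite mulA.
  by split=> [/(Dx c).1/(Dy _).1|/(Dy _).2/(Dx c).2].
- move=> x Dx c; have := Dx (mul c (inv x)).
  by rewrite -mulA mulVg mulg1 => Dcx; split=> [/Dcx.2|/Dcx.1].
Qed.

End GroupIdentities.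

Lemma hausdorff_prod {X Y : topologicalType} :
  hausdorff_space X -> hausdorff_space Y -> hausdorff_space (X * Y)%type.
Proof.
move=> hX hY [p1 p2] [q1 q2] cl; congr pair; [apply: hX|apply: hY] => A B nA nB.
- have [z [Az Bz]] := cl (fst @^-1` A) (fst @^-1` B) (cvg_fst nA) (cvg_fst nB).
  by exists z.1.
- have [z [Az Bz]] := cl (snd @^-1` A) (snd @^-1` B) (cvg_snd nA) (cvg_snd nB).
  by exists z.2.
Qed.

Lemma separated_closedl {X : topologicalType} {A B : set X} :
  closed (A `|` B) -> separated A B -> closed A.
Proof.
move=> clAB [clAB0 _] a clAa.
have /clAB [//|Ba] : closure (A `|` B) a.
  by apply: closureS clAa; exact: subsetUl.
by have : (closure A `&` B) a by []; rewrite clAB0.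
Qed.

Section CompactSpace.
Context {X : topologicalType}.
Hypothesis cX : compact [set: X].

Lemma compact_directed_closed_meet (I : Type) (D : set I) (f : I -> set X) :
  (forall i, D i -> closed (f i)) -> (exists i, D i) ->
  (forall i j, D i -> D j -> exists2 k, D k & f k `<=` f i `&` f j) ->
  (forall i, D i -> f i !=set0) -> exists z, forall i, D i -> f i z.
Proof.
move=> clf D0 dirf f0.
have PF := filter_from_proper (filter_from_filter D0 dirf) f0.
have [z [_ clz]] := cX _ PF filterT.
exists z => i Di; rewrite (closure_id (f i)).1; last exact: clf.
by move=> B /clz; apply; exists i.
Qed.

Definition quasi_component (x : X) :=
  \bigcap_(U in [set U | clopen U /\ U x]) U.

Lemma quasi_component_sub_clopen x (O : set X) : open O ->
  quasi_component x `<=` O -> exists U, [/\ clopen U, U x & U `<=` O].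
Proof.
move=> oO QO; apply: contrapT => noU.
have [||||z Uz] := @compact_directed_closed_meet _ [set U | clopen U /\ U x]
    (fun U => U `&` ~` O).
- by move=> U [[_ clU] _]; apply: closedI clU _; exact: open_closedC.
- by exists setT; split; first exact: clopenT.
- move=> U V [cU Ux] [cV Vx]; exists (U `&` V).
    by split; [exact: clopenI|].
  by move=> p [[Up Vp] nOp].
- move=> U [cU Ux]; apply: contrapT => /set0P/negP; rewrite negbK => /eqP UO.
  apply: noU; exists U; split=> // p Up; apply: contrapT => nOp.
  by have : (U `&` ~` O) p by []; rewrite UO.
have [_ nOz] := Uz setT (conj clopenT I).
by apply/nOz/QO => U /Uz[].
Qed.

Hypothesis hX : hausdorff_space X.

Lemma compact_separate_closed {A B : set X} : closed A -> closed B ->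
  A `&` B = set0 ->
  exists U V, [/\ open U, open V, A `<=` U, B `<=` V & U `&` V = set0].
Proof.
move=> clA clB AB0.
have AnB : set_nbhs A (~` B).
  move=> a Aa; apply: open_nbhs_nbhs; split; first exact: closed_openC.
  by move=> Ba; have : (A `&` B) a by []; rewrite AB0.
have [W AW clWB] := compact_normal hX cX clA AnB.
exists W°, (~` closure W); split => //.
- exact: open_interior.
- exact/closed_openC/closed_closure.
- by move=> b Bb /clWB.
- by rewrite -subsets_disjoint; apply: subset_trans (@interior_subset _ W) _;
    exact: subset_closure.
Qed.

Lemma quasi_component_connected x : connected (quasi_component x).
Proof.
apply/connectedP => E [E0 QE sepE].
have clQ : closed (quasi_component x) by apply: closed_bigI => U [[]].
have no_separation A B : quasi_component x = A `|` B -> separated A B ->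
    A x -> B !=set0 -> False.
  move=> QAB sepAB Ax [b Bb]; rewrite QAB in clQ.
  have clA := separated_closedl clQ sepAB.
  have clB : closed B.
    by rewrite setUC in clQ; apply: separated_closedl clQ _; rewrite separatedC.
  have [U [V [oU oV AU BV UV0]]] :=
    compact_separate_closed clA clB (separated_disjoint sepAB).
  have [D [[oD clD] Dx DUV]] : exists D, [/\ clopen D, D x & D `<=` U `|` V].
    apply: quasi_component_sub_clopen; first exact: openU.
    by rewrite QAB; exact: setUSS.
  have DU_clopen : clopen (D `&` U).
    split; first exact: openI.
    suff -> : D `&` U = D `&` ~` V by apply: closedI => //; exact: open_closedC.
    apply/seteqP; split=> p [Dp Up]; split=> //.
      by move=> Vp; have : (U `&` V) p by []; rewrite UV0.
    by case: (DUV p Dp).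
  have [_ Ub] : (D `&` U) b.
    have : quasi_component x b by rewrite QAB; right.
    by move/(_ (D `&` U)); apply; split => //; split; [exact: Dx|exact: AU].
  have : (U `&` V) b by split; [|exact: BV].
  by rewrite UV0.
have : quasi_component x x by move=> U [].
rewrite QE => -[Ex|Ex].
- exact: no_separation QE sepE Ex (E0 true).
- by apply: (no_separation (E true) (E false)); rewrite 1?setUC 1?separatedC.
Qed.

Lemma compact_totally_disconnected_zero_dimensional :
  totally_disconnected [set: X] -> zero_dimensional X.
Proof.
move=> tdX x y /eqP xy; apply: contrapT => noU; apply: xy.
have Qy : quasi_component x y.
  by move=> U [cU Ux]; apply: contrapT => nUy; apply: noU; exists U.
have : connected_component [set: X] x y.
  apply: connected_component_max Qy => //; last first.
    exact: quasi_component_connected.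
  by move=> U [].
by rewrite tdX.
Qed.

Lemma open_closure_sub {V : set X} {p : X} : open V -> V p ->
  exists W, [/\ open W, W p & closure W `<=` V].
Proof.
move=> oV Vp.
have [W0 pW0 clW0V] :=
  compact_regular hX cX filterT (open_nbhs_nbhs (conj oV Vp)).
exists W0°; split; first exact: open_interior.
- exact: nbhs_singleton (nbhs_interior pW0).
- by apply: subset_trans clW0V; apply: closureS; exact: interior_subset.
Qed.

Lemma compact_baire (x0 : X) {E : nat -> set X} :
  (forall n, closed (E n)) -> (forall x, exists n, E n x) ->
  exists n U, [/\ open U, U !=set0 & U `<=` E n].
Proof.
move=> clE covE; apply: contrapT => noint.
pose NO := {V : set X | open V /\ V !=set0}.
have shrink (nV : nat * NO) :
    exists W : NO, closure (sval W) `<=` sval nV.2 `&` ~` E nV.1.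
  case: nV => n [V [oV V0]] /=.
  have [p [Vp nEp]] : exists p, V p /\ ~ E n p.
    apply: contrapT => nVE; apply: noint; exists n, V; split => // p Vp.
    by apply: contrapT => nEp; apply: nVE; exists p.
  have oVE : open (V `&` ~` E n) by apply: openI oV _; exact: closed_openC.
  have [W [oW Wp clWV]] := open_closure_sub oVE (conj Vp nEp).
  by exists (exist _ W (conj oW (ex_intro _ p Wp))).
have [f fP] := choice shrink.
pose U := fix U n := if n is m.+1 then f (m, U m)
  else exist _ setT (conj openT (ex_intro _ x0 I)) : NO.
have U_decr m n : (m <= n)%N -> sval (U n) `<=` sval (U m).
  move=> /subnKC <-; elim: (n - m)%N => [|k IHk]; first by rewrite addn0.
  by rewrite addnS => p /subset_closure /(fP (_, U _)) [/IHk].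
have [||||z Uz] := @compact_directed_closed_meet _ setT
    (fun n => closure (sval (U n))).
- by move=> n _; exact: closed_closure.
- by exists 0%N.
- move=> m n _ _; exists (maxn m n) => // p clp.
  split; apply: (closureS (U_decr _ _ _)) clp; [exact: leq_maxl|].
  exact: leq_maxr.
- move=> n _; case: (svalP (U n)) => _ [p Up].
  by exists p; exact: subset_closure.
have [n Enz] := covE z.
by have [_] := fP (n, U n) z (Uz n.+1 I).
Qed.

End CompactSpace.

Section TopologicalGroup.
Context {T : topologicalType} {mul : T -> T -> T} {inv : T -> T} {one : T}.
Hypothesis TG : topological_group mul inv one.

Let G : group_axioms mul inv one. Proof. by case: TG. Qed.
Let mul_cont : continuous (fun p : T * T => mul p.1 p.2).
Proof. by case: TG. Qed.
Let inv_cont : continuous inv. Proof. by case: TG. Qed.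

Lemma continuous_mulf (X : topologicalType) (f g : X -> T) :
  continuous f -> continuous g -> continuous (fun p => mul (f p) (g p)).
Proof.
move=> cf cg p; apply: continuous2_cvg; last 2 first; [exact: cf|exact: cg|].
exact: mul_cont (f p, g p).
Qed.

Lemma continuous_iter_comm n :
  continuous (fun p : T * T => iter_comm mul inv p.1 n p.2).
Proof.
have cinv (f : T * T -> T) : continuous f -> continuous (fun p => inv (f p)).
  by move=> cf p; apply: continuous_comp (cf p) (inv_cont _).
have csnd : continuous (@snd T T) by move=> p; exact: cvg_snd.
elim: n => [|n IHn] /=; first by move=> p; exact: cvg_fst.
rewrite /comm; apply: continuous_mulf (csnd); apply: continuous_mulf (IHn).
by apply: continuous_mulf; apply: cinv.
Qed.

Lemma nbhs_mull {a x : T} {W : set T} :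
  nbhs (mul a x) W -> nbhs x [set y | W (mul a y)].
Proof.
move=> /(mul_cont (a, x))[[A1 A2] [nA1 nA2] A12W].
apply: filterS nA2 => y A2y; apply: (A12W (a, y)).
by split => //; exact: nbhs_singleton.
Qed.

Lemma open_subgroup (H : set T) :
  is_subgroup mul inv one H -> nbhs one H -> open H.
Proof.
case: G => mulA mul1g _ mulVg mulgV [_ HM _] nH; rewrite openE => h Hh.
rewrite -(mulVg h) in nH; apply: filterS (nbhs_mull nH) => y Hhy.
by have := HM _ _ Hh Hhy; rewrite mulA mulgV mul1g.
Qed.

Lemma compact_open_nbhs_stable {D : set T} : compact D -> open D ->
  nbhs one [set q | forall c, D c -> D (mul c q)].
Proof.
case: G => _ _ mulg1 _ _ cD oD.
apply: (compact_near_coveringP D).1 cD T (nbhs one)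
  (fun q c => D (mul c q)) _ _.
move=> c Dc; have nD : nbhs (mul c one) D.
  by rewrite mulg1; exact: open_nbhs_nbhs.
exact: (mul_cont (c, one) D nD).
Qed.

Hypothesis PG : profinite_group mul inv one.

Lemma open_subgroup_sub {V : set T} : nbhs one V ->
  exists H, [/\ is_subgroup mul inv one H, open H & H `<=` V].
Proof.
case: PG => _ cT hT tdT nV; case: G => mulA mul1g mulg1 mulVg mulgV.
have zdT := compact_totally_disconnected_zero_dimensional cT hT tdT.
have [D [D1 [oD clD]] DV] := zero_dimensional_cvg hT zdT cT nV.
pose H := [set x | forall c, D c <-> D (mul c x)].
have sgH : is_subgroup mul inv one H by exact: is_subgroup_right_stabilizer.
pose N := [set q | forall c, D c -> D (mul c q)].
have nN : nbhs one N.
  exact: compact_open_nbhs_stable (subclosed_compact clD cT (@subsetT _ D)) oD.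
have nH : nbhs one H.
  have nNV : nbhs one [set q | N (inv q)].
    have : nbhs (inv one) N by rewrite (inv_one G).
    by move/(inv_cont one).
  apply: filterS (filterI nN nNV) => x [Nx NVx] c; split; first exact: Nx.
  by move/NVx; rewrite -mulA mulgV mulg1.
exists H; split => //; first exact: open_subgroup.
by move=> x /(_ one)[/(_ D1)]; rewrite mul1g => /DV.
Qed.

Lemma open_subgroup_translates_sub {g1 g2 : T} {W : set (T * T)} :
  nbhs (g1, g2) W -> exists H, [/\ is_subgroup mul inv one H, open H &
    forall h1 h2, H h1 -> H h2 -> W (mul g1 h1, mul g2 h2)].
Proof.
case: G => _ _ mulg1 _ _ [[A1 A2] /= [nA1 nA2] A12W].
rewrite -[g1]mulg1 in nA1; rewrite -[g2]mulg1 in nA2.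
have [H [sgH oH HA]] :=
  open_subgroup_sub (filterI (nbhs_mull nA1) (nbhs_mull nA2)).
exists H; split => // h1 h2 /HA[A1h1 _] /HA[_ A2h2].
exact: (A12W (_, _)).
Qed.

End TopologicalGroup.

Theorem lemma2p5 (T : topologicalType) (mul : T -> T -> T) (inv : T -> T) (one : T) :
  profinite_group mul inv one ->
  locally_nilpotent mul inv one ->
  exists (n : nat) (g1 g2 : T) (H : set T),
    (0 < n)%N /\ is_subgroup mul inv one H /\ open H /\
    forall h1 h2, H h1 -> H h2 ->
      iter_comm mul inv (mul g1 h1) n (mul g2 h2) = one.
Proof.
move=> PG LN; have [TG cT hT _] := PG; have [G _ _] := TG.
pose E n := [set p : T * T | iter_comm mul inv p.1 n p.2 = one].
have clE n : closed (E n).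
  apply: (@preimage_closed _ _
    (fun p => iter_comm mul inv p.1 n p.2) [set one]).
    by move=> p _; exact: (continuous_iter_comm TG).
  exact/accessible_closed_set1/hausdorff_accessible.
have cTT : compact [set: T * T] by rewrite -setXTT; exact: compact_setX.
have [n [W [oW [[g1 g2] Wg] WE]]] :=
  compact_baire cTT (hausdorff_prod hT hT) (one, one) clE
    (fun p => locally_nilpotent_engel LN p.1 p.2).
have [H [sgH oH HW]] :=
  open_subgroup_translates_sub TG PG (open_nbhs_nbhs (conj oW Wg)).
exists n.+1, g1, g2, H; do 3!split => //.
move=> h1 h2 Hh1 Hh2; apply: (iter_comm_eq1_le G) (leqnSn n) _.
exact: WE (HW _ _ Hh1 Hh2).
Qed.
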